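(* Let $G$ be a finite solvable group and let $1=H_0 \triangleleft H_1\triangleleft\cdots\triangleleft H_m=G$ be a strictly ascending series of normal subgroups of $G$ such that $H_i=\gamma_{k_i}(H_{i+1})$ with $k_i\in\mathbb{N}\cup\{\infty\}$ for $i\in\{1,\dots,m-1\}$ and $k_0=\infty$. Let $c=\lvert\{i\in\{1,\dots,m-1\}:k_i=\infty\}\rvert$ and $C=\prod_{k_i<\infty}(k_i+1)$, and set $D=c/C^{1/c}$. Then the $n$-input AND function can be computed by a $G$-program of length $O(2^{Dn^{1/c}})$. More precisely, for every $n\in\mathbb{N}$ there exist $1\neq g\in G$ and a $G$-program $Q_n$ over variables $B_1,\dots,B_n$ of length $O(2^{Dn^{1/c}})$ such that for every assignment $\sigma:\{B_1,\dots,B_n\}\to\{0,1\}$, $\sigma(Q_n)=g$ if $\sigma(B_1)=\cdots=\sigma(B_n)=1$ and $\sigma(Q_n)=1$ otherwise.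
   Context: Commutators: $[x,y]=x^{-1}y^{-1}xy$; for subgroups $A,B$, $[A,B]$ is the subgroup generated by all $[a,b]$, and $[A_1,\dots,A_k]=[[A_1,\dots,A_{k-1}],A_k]$. For a group $H$ and $k\in\mathbb{N}$, $\gamma_kH=[H,H,\dots,H]$ with $k+1$ copies of $H$ (so $\gamma_1H=[H,H]$), and $\gamma_\infty H$ (the nilpotent residual) is $\gamma_iH$ for all sufficiently large $i$. An $n$-input $G$-program of length $\ell$ is a sequence $\langle B_{i_1},a_1,b_1\rangle\cdots\langle B_{i_\ell},a_\ell,b_\ell\rangle$ with $B_{i_j}\in\{B_1,\dots,B_n\}$ and $a_j,b_j\in G$; for $\sigma:\{B_1,\dots,B_n\}\to\{0,1\}$, $\sigma(P)=c_1\cdots c_\ell\in G$ where $c_j=a_j$ if $\sigma(B_{i_j})=0$ and $c_j=b_j$ if $\sigma(B_{i_j})=1$. A $G$-program $P$ computes $f:\{0,1\}^n\to\{0,1\}$ if there is $S\subseteq G$ with $\sigma(P)\in S$ iff $f(\sigma)=1$. *)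

From Stdlib Require Import Reals.
From mathcomp Require Import all_boot all_fingroup all_solvable.
Set Implicit Arguments. Unset Strict Implicit. Unset Printing Implicit Defensive.

Local Open Scope group_scope.

(* gamma_k(B) = [B,...,B] with k+1 copies of B = 'L_(k+1)(B) in MathComp
   ('L_1(B) = B, 'L_2(B) = [~: B, B]).  [~ x, y] = x^-1 * y^-1 * x * y.
   k = None encodes k = infinity: A is the nilpotent residual gamma_infty(B),
   i.e. A = gamma_j(B) for all sufficiently large j. *)
Definition is_gamma (gT : finGroupType) (k : option nat) (A B : {set gT}) : Prop :=
  match k with
  | Some k => A = 'L_k.+1(B)
  | None => exists N, forall j, (N <= j)%N -> A = 'L_j.+1(B)
  end.

(* An n-input G-program: a sequence of instructions <B_i, a, b> with
   i : 'I_n (variable B_(i+1)) and a, b group elements. *)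
Definition program (gT : finGroupType) (n : nat) := seq ('I_n * gT * gT).

Definition prog_eval (gT : finGroupType) (n : nat) (P : program gT n)
    (sigma : 'I_n -> bool) : gT :=
  foldr (fun ins acc => (if sigma ins.1.1 then ins.2 else ins.1.2) * acc) 1 P.

Definition prog_over (gT : finGroupType) (n : nat) (G : {set gT}) (P : program gT n) :=
  all (fun ins => (ins.1.2 \in G) && (ins.2 \in G)) P.

Definition count_inf (k : nat -> option nat) (m : nat) : nat :=
  count (fun i => k i == None) (iota 1 m.-1).

Definition prod_fin (k : nat -> option nat) (m : nat) : nat :=
  \prod_(1 <= i < m) (if k i is Some ki then ki.+1 else 1).

Definition and_bound (c C n : nat) : R :=
  let D := Rdiv (INR c) (Rpower (INR C) (Rinv (INR c))) in
  Rpower 2 (Rmult D (Rpower (INR n) (Rinv (INR c)))).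

(* Barrington's commutator trick: if P and Q are programs that output x and y
   when all their variables are 1 and output 1 otherwise, then
   P^-1 Q^-1 P Q outputs [x, y] when all variables of both are 1 and 1
   otherwise, at twice the combined length.  Walking down the series, H_i is
   generated by iterated commutators of generators of H_(i+1): (k_i+1)-fold
   ones if k_i is finite, and, if k_i is infinite, the commutators
   [h, w_1, ..., w_d] with h in H_i a constant, since H_i = [H_i, H_(i+1)].
   A nontrivial generator of H_1 thus computes the AND of d^c C variables
   with a program of length O(2^(d c)); take d = ceil((n/C)^(1/c)). *)

From Stdlib Require Import Reals Lra.
From mathcomp Require Import all_boot all_fingroup all_solvable.
From mathcomp Require Import zify.
Set Implicit Arguments. Unset Strict Implicit. Unset Printing Implicit Defensive.
Local Open Scope group_scope.

Section CommutatorSets.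
Variable gT : finGroupType.
Implicit Types (A W X : {set gT}) (G : {group gT}).

Lemma commg_gen X W :
  X \subset 'N([~: X, W]) -> W \subset 'N([~: X, W]) ->
  [~: <<X>>, <<W>>] = [~: X, W].
Proof.
move=> nRX nRW; apply/esym/eqP; rewrite eqEsubset commgSS ?subset_gen //=.
rewrite -quotient_cents2 ?gen_subG // quotient_gen // gen_subG.
rewrite quotient_gen // /= cent_gen.
exact: quotient_cents2r.
Qed.

Lemma commg_set_norm G X W : G \subset 'N(X) -> G \subset 'N(W) ->
  G \subset 'N(commg_set X W).
Proof.
move=> nXG nWG; apply/subsetP=> g Gg; rewrite inE.
apply/subsetP=> _ /imsetP[_ /imset2P[x w Xx Ww ->] ->].
by rewrite conjRg imset2_f // memJ_norm ?(subsetP nXG) ?(subsetP nWG).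
Qed.

Definition commg_set_iter A W t := iter t (fun S => commg_set S W) A.

Section Normalized.
Variables (G : {group gT}) (A W : {set gT}).
Hypotheses (sAG : A \subset G) (sWG : W \subset G).
Hypotheses (nAG : G \subset 'N(A)) (nWG : G \subset 'N(W)).

Lemma commg_set_iter_sub t : commg_set_iter A W t \subset G.
Proof.
elim: t => //= t IHt.
exact: subset_trans (subset_gen _) (comm_subG IHt sWG).
Qed.

Lemma commg_set_iter_norm t : G \subset 'N(commg_set_iter A W t).
Proof. by elim: t => //= t IHt; apply: commg_set_norm. Qed.

Lemma gen_commg_set_iterS t :
  <<commg_set_iter A W t.+1>> = [~: <<commg_set_iter A W t>>, <<W>>].
Proof.
have sRG := commg_set_iter_sub t; have nRG := commg_set_iter_norm t.
have nG : G \subset 'N([~: commg_set_iter A W t, W]) by apply: normsR.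
by rewrite commg_gen ?(subset_trans _ nG).
Qed.

Lemma gen_commg_set_iter_fixed t :
  [~: <<A>>, <<W>>] = <<A>> -> <<commg_set_iter A W t>> = <<A>>.
Proof. by move=> RA; elim: t => // t IHt; rewrite gen_commg_set_iterS IHt. Qed.

End Normalized.

Lemma gen_commg_set_iter_lcn G W t : W \subset G -> G \subset 'N(W) ->
  <<commg_set_iter W W t>> = 'L_t.+1(<<W>>).
Proof.
move=> sWG nWG; elim: t => // t IHt.
by rewrite (gen_commg_set_iterS sWG sWG nWG nWG) IHt.
Qed.

End CommutatorSets.

Section Programs.
Variables (gT : finGroupType) (n : nat).
Implicit Types (P Q : program gT n) (G : {group gT}).

Definition prog_inv P : program gT n :=
  rev (map (fun ins => (ins.1.1, ins.1.2^-1, ins.2^-1)) P).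

Lemma prog_eval_cat P Q s : prog_eval (P ++ Q) s = prog_eval P s * prog_eval Q s.
Proof. by elim: P => [|ins P IHP] /=; rewrite ?mul1g // IHP mulgA. Qed.

Lemma prog_eval_inv P s : prog_eval (prog_inv P) s = (prog_eval P s)^-1.
Proof.
elim: P => [|ins P IHP]; first by rewrite /= invg1.
rewrite /prog_inv map_cons rev_cons -cats1 prog_eval_cat -/(prog_inv P) IHP.
by rewrite /= invMg mulg1; case: (s _).
Qed.

Lemma prog_over_cat G P Q : prog_over G (P ++ Q) = prog_over G P && prog_over G Q.
Proof. exact: all_cat. Qed.

Lemma prog_over_inv G P : prog_over G (prog_inv P) = prog_over G P.
Proof. by rewrite /prog_over all_rev all_map; apply: eq_all => ins /=; rewrite !groupV. Qed.

Lemma size_prog_inv P : size (prog_inv P) = size P.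
Proof. by rewrite size_rev size_map. Qed.

Definition computes_and P h (X : seq 'I_n) :=
  forall s, prog_eval P s = if all s X then h else 1.

Definition and_programmable G N L h := forall X : seq 'I_n, size X <= N ->
  exists P, [/\ prog_over G P, size P <= L & computes_and P h X].

Lemma and_programmable_le G N L N' L' h :
  N' <= N -> L <= L' -> and_programmable G N L h -> and_programmable G N' L' h.
Proof.
move=> leN leL hP X sX; have [|P [oP sP cP]] := hP X; first exact: leq_trans leN.
by exists P; split=> //; apply: leq_trans leL.
Qed.

Section Leaves.
Variables (i0 : 'I_n) (G : {group gT}) (a : gT).
Hypothesis Ga : a \in G.

Lemma and_programmable_const : and_programmable G 0 1 a.
Proof.
case=> // _; exists [:: (i0, a, a)]; split=> //; first by rewrite /prog_over /= Ga.
by move=> s /=; rewrite mulg1; case: (s i0).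
Qed.

Lemma and_programmable_var : and_programmable G 1 1 a.
Proof.
case=> [|x [|//]] _; first exact: and_programmable_const.
exists [:: (x, 1, a)]; split=> //; first by rewrite /prog_over /= Ga group1.
by move=> s /=; rewrite mulg1 andbT.
Qed.

End Leaves.

Lemma and_programmable_commg G N1 N2 L1 L2 x y :
    and_programmable G N1 L1 x -> and_programmable G N2 L2 y ->
  and_programmable G (N1 + N2) (2 * (L1 + L2)) [~ x, y].
Proof.
move=> hx hy X sX.
have [|P [oP sP cP]] := hx (take N1 X); first by rewrite size_take_min; lia.
have [|Q [oQ sQ cQ]] := hy (drop N1 X); first by rewrite size_drop; lia.
exists (prog_inv P ++ prog_inv Q ++ P ++ Q); split.
- by rewrite !prog_over_cat !prog_over_inv oP oQ.
- by rewrite !size_cat !size_prog_inv; lia.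
move=> s; rewrite -[X in all s X](cat_take_drop N1) all_cat !prog_eval_cat !prog_eval_inv cP cQ.
by case: (all s _); case: (all s _); rewrite /= ?invg1 ?mul1g ?mulg1 ?mulVg.
Qed.

Lemma and_programmable_commg_set_iter G (A W : {set gT}) N0 L0 N L t :
    {in A, forall a, and_programmable G N0 L0 a} ->
    {in W, forall w, and_programmable G N L w} ->
  {in commg_set_iter A W t,
    forall x, and_programmable G (N0 + t * N) (2 ^ t * (L0 + 2 * L) - 2 * L) x}.
Proof.
move=> hA hW; elim: t => [|t IHt] x /=.
  by move/hA; apply: and_programmable_le; rewrite ?expn0; lia.
case/imset2P=> y w Sy Ww ->.
apply: and_programmable_le (and_programmable_commg (IHt _ Sy) (hW _ Ww)); first lia.
have : L0 + 2 * L <= 2 ^ t * (L0 + 2 * L) by rewrite leq_pmull ?expn_gt0.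
by rewrite expnS -mulnA; lia.
Qed.

End Programs.

(* At one level of the series, the number of variables is multiplied by
   level_width and the program length by at most 3 * 2 ^ level_depth, the
   commutator nesting depth; an infinite level (None) nests d commutators. *)
Definition level_width d (k : option nat) := if k is Some k then k.+1 else d.
Definition level_depth d (k : option nat) := if k is Some k then k else d.

Lemma is_gamma_None_commg (gT : finGroupType) (A B : {set gT}) :
  is_gamma None A B -> A = [~: A, B].
Proof. by case=> N AL; rewrite {2}(AL N) // -lcnSn -AL. Qed.

Section SeriesStep.
Variables (gT : finGroupType) (n : nat) (i0 : 'I_n) (G : {group gT}).
Variables (W : {set gT}) (N L : nat).
Hypotheses (sWG : W \subset G) (nWG : G \subset 'N(W)) (L_gt0 : 0 < L).
Hypothesis hW : {in W, forall w, and_programmable n G N L w}.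

Lemma and_programmable_gamma d kA (A : {group gT}) :
    A <| G -> is_gamma kA A <<W>> ->
  exists2 V : {set gT}, [/\ V \subset G, G \subset 'N(V) & <<V>> = A] &
    {in V, forall v, and_programmable n G (level_width d kA * N)
                                        (3 * 2 ^ level_depth d kA * L) v}.
Proof.
case/andP=> sAG nAG; case: kA => [k /= defA | /is_gamma_None_commg defA].
  exists (commg_set_iter W W k).
    split; [exact: commg_set_iter_sub | exact: commg_set_iter_norm | ].
    by rewrite defA (gen_commg_set_iter_lcn _ sWG nWG).
  move=> v /(and_programmable_commg_set_iter hW hW).
  by apply: and_programmable_le; rewrite ?leq_subr //; lia.
exists (commg_set_iter A W d).
  split; [exact: commg_set_iter_sub | exact: commg_set_iter_norm | ].
  by rewrite (gen_commg_set_iter_fixed sAG sWG nAG nWG) ?genGid // -defA.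
have hA : {in A, forall a, and_programmable n G 0 1 a}.
  by move=> a Aa; apply: (and_programmable_const i0); apply: (subsetP sAG).
move=> v /(and_programmable_commg_set_iter hA hW).
apply: and_programmable_le => /=; first lia.
have : (1 <= 2 ^ d)%N by rewrite expn_gt0.
set p := (2 ^ d)%N; nia.
Qed.

End SeriesStep.

Section Series.
Variables (gT : finGroupType) (G : {group gT}) (m : nat).
Variables (H : nat -> {group gT}) (k : nat -> option nat).
Hypotheses (Hm : H m = G) (nHG : forall i, i <= m -> H i <| G).
Hypothesis gammaH : forall i, 1 <= i < m -> is_gamma (k i) (H i) (H i.+1).
Variables (n : nat) (i0 : 'I_n) (d : nat).

Lemma and_programmable_series i : 0 < i <= m ->
  exists2 W : {set gT}, [/\ W \subset G, G \subset 'N(W) & <<W>> = H i] &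
    {in W, forall w, and_programmable n G
      (\prod_(i <= l < m) level_width d (k l))%N
      (\prod_(i <= l < m) (3 * 2 ^ level_depth d (k l)))%N w}.
Proof.
case/andP=> i_gt0 le_im; rewrite -(subKn le_im) in i_gt0 *.
elim: (m - i) i_gt0 => [_ | j IHj lt0j].
  exists (G : {set gT}); first by rewrite subn0 Hm genGid normG.
  by move=> w Gw; rewrite subn0 !big_geq //; apply: and_programmable_var.
have [|W [sWG nWG defW] hW] := IHj; first lia.
have defSi : m - j = (m - j.+1).+1 by lia.
set i' := m - j.+1 in lt0j defSi *.
have lt_im : i' < m by lia.
rewrite defSi in defW hW; rewrite !(big_ltn lt_im).
have L_gt0 : (0 < \prod_(i'.+1 <= l < m) (3 * 2 ^ level_depth d (k l)))%N.
  by apply: prodn_gt0 => l; rewrite muln_gt0 expn_gt0.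
have gammaW : is_gamma (k i') (H i') <<W>> by rewrite defW; apply: gammaH; lia.
have [V defV hV] := and_programmable_gamma i0 sWG nWG L_gt0 hW d (nHG (ltnW lt_im)) gammaW.
by exists V => // v /hV; apply: and_programmable_le; rewrite ?mulnA.
Qed.

End Series.

Local Close Scope group_scope.

Lemma prod_level_width k d m :
  \prod_(1 <= l < m) level_width d (k l) = d ^ count_inf k m * prod_fin k m.
Proof.
rewrite /prod_fin /count_inf /index_iota subn1.
elim: (iota 1 m.-1) => [|l s IHs]; first by rewrite !big_nil.
rewrite !big_cons IHs /=; case: (k l) => [kk|] /=; first by rewrite add0n mulnCA.
by rewrite mul1n add1n expnS mulnA.
Qed.

Lemma prod_level_length k d m :
  \prod_(1 <= l < m) (3 * 2 ^ level_depth d (k l)) =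
  \prod_(1 <= l < m) (3 * 2 ^ level_depth 0 (k l)) * 2 ^ (d * count_inf k m).
Proof.
rewrite /count_inf /index_iota subn1.
elim: (iota 1 m.-1) => [|l s IHs]; first by rewrite !big_nil muln0.
rewrite !big_cons IHs /=; case: (k l) => [kk|] /=; first by rewrite !mulnA.
by rewrite mulnDr muln1 expnD !mulnA; lia.
Qed.

Section RealBound.
Local Open Scope R_scope.

Lemma INR_expn b e : INR (b ^ e)%N = INR b ^ e.
Proof. by elim: e => [|e IHe]; rewrite ?expn0 // expnS mult_INR IHe. Qed.

Lemma pow_Rpower_inv x c : 0 < x -> (0 < c)%N -> Rpower x (/ INR c) ^ c = x.
Proof.
move=> x_gt0 c_gt0; have cR : INR c <> 0 by apply: not_0_INR; lia.
by rewrite -Rpower_pow ?Rpower_mult ?Rinv_l ?Rpower_1 //; apply: exp_pos.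
Qed.

Lemma nat_ceil_between y : 0 <= y -> exists d : nat, y <= INR d <= y + 1.
Proof.
move=> y_ge0; have [gt_up le_up] := archimed y.
have up_gt0 : (0 < up y)%Z by apply: lt_IZR; lra.
exists (Z.to_nat (up y)); rewrite INR_IZR_INZ Znat.Z2Nat.id; [lra | lia].
Qed.

Lemma exists_and_bound_depth c C n : (0 < c)%N -> (0 < C)%N -> (0 < n)%N ->
  exists d : nat, (n <= d ^ c * C)%N /\
    INR (2 ^ (d * c)) <= INR (2 ^ c) * and_bound c C n.
Proof.
move=> c_gt0 C_gt0 n_gt0.
have [cR CR nR] : [/\ 0 < INR c, 0 < INR C & 0 < INR n] by split; apply: lt_0_INR; lia.
set u := Rpower (INR n) (/ INR c); set v := Rpower (INR C) (/ INR c).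
have [u_gt0 v_gt0] : 0 < u /\ 0 < v by split; apply: exp_pos.
have [d [le_yd le_dy]] := nat_ceil_between (Rlt_le _ _ (Rdiv_lt_0_compat _ _ u_gt0 v_gt0)).
exists d; split.
  apply/leP/INR_le; rewrite mult_INR INR_expn -(pow_Rpower_inv nR c_gt0) -/u.
  rewrite -[INR C](pow_Rpower_inv CR c_gt0) -/v -Rpow_mult_distr.
  apply: pow_incr; split; first lra.
  have -> : u = u / v * v by field; lra.
  by apply: Rmult_le_compat_r; lra.
have INR2 : INR 2 = 2 by rewrite /= ; lra.
rewrite !INR_expn /and_bound -/u -/v INR2 -!Rpower_pow ?mult_INR -?Rpower_plus; try lra.
apply: Rle_Rpower; first lra.
have -> : INR c / v * u = u / v * INR c by field; lra.
nra.
Qed.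

End RealBound.

Lemma all_enum (T : finType) (P : pred T) : all P (enum T) = [forall x, P x].
Proof. by apply/allP/forallP => PT x; rewrite ?PT ?mem_enum. Qed.

Unset Implicit Arguments.

Theorem proposition3p1 (gT : finGroupType) (G : {group gT}) (m : nat)
    (H : nat -> {group gT}) (k : nat -> option nat) :
  solvable G ->
  H 0 = 1%G -> H m = G ->
  (forall i, (i <= m)%N -> (H i <| G)%g) ->
  (forall i, (i < m)%N -> (H i \proper H i.+1)%g) ->
  (forall i, (1 <= i < m)%N -> is_gamma (k i) (H i) (H i.+1)) ->
  (0 < count_inf k m)%N ->
  exists K : R, Rlt 0 K /\
    forall n : nat, (0 < n)%N ->
      exists (g : gT) (Q : program gT n),
        [/\ (g \in G)%g, (g != 1)%g, prog_over (G : {set gT}) Q,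
            Rle (INR (size Q)) (Rmult K (and_bound (count_inf k m) (prod_fin k m) n))
          & forall sigma : 'I_n -> bool,
              prog_eval Q sigma = if [forall i, sigma i] then g else 1%g].
Proof.
move=> _ H0 Hm nHG ltH gammaH c_gt0.
set c := count_inf k m in c_gt0 *; set C := prod_fin k m.
set K0 := \prod_(1 <= l < m) (3 * 2 ^ level_depth 0 (k l)).
have C_gt0 : 0 < C by apply: prodn_gt0 => l; case: (k l).
have K0_gt0 : 0 < K0 by apply: prodn_gt0 => l; rewrite muln_gt0 expn_gt0.
exists (INR (K0 * 2 ^ c)); split.
  by apply/lt_0_INR/ltP; rewrite muln_gt0 K0_gt0 expn_gt0.
move=> n n_gt0; have [d [le_n_dC le_length]] := exists_and_bound_depth c_gt0 C_gt0 n_gt0.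
have lt1m : 1 < m by move: c_gt0; rewrite /c /count_inf; case: (m) => [|[|]].
have le1m : 0 < 1 <= m by lia.
have [W [sWG _ defW] hW] := and_programmable_series Hm nHG gammaH (Ordinal n_gt0) d le1m.
have [g Wg ntg] : exists2 g, g \in W & g != 1%g.
  have /proper_subn : H 0 \proper H 1 by apply: ltH; lia.
  rewrite H0 -defW gen_subG => /subsetPn[g Wg].
  by rewrite inE; exists g.
have [|Q [oQ sQ cQ]] := hW g Wg (enum 'I_n).
  by rewrite size_enum_ord prod_level_width.
exists g, Q; split=> //; first exact: (subsetP sWG).
  apply: Rle_trans (le_INR _ _ (leP sQ)) _.
  rewrite prod_level_length !mult_INR Rmult_assoc.
  by apply: Rmult_le_compat_l (pos_INR _) _.
by move=> sigma; rewrite cQ all_enum.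
Qed.
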